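(* Let $\mathbf{u}=(u_1,\dots,u_n)$ be a utility profile over $C$, let $R\in\{R^C,R^V\}$, and suppose that $W(\mathbf{a})=\{c_j\}$ for some $c_j\in C$, where $\mathbf{a}$ is the truthful ballot vector. Then $\mathbf{a}$ is a PNE of the game $G=(\mathcal{T},R,\mathbf{u})$ if and only if for every $i\in N$ and every $c_k\in H(\mathbf{a})\setminus\{a_i\}$ it holds that $c_j\succ_i c_k$.
   Context: Let $C=\{c_1,\dots,c_m\}$ be candidates and $N=\{1,\dots,n\}$ voters, each with an injective utility function $u_i:C\to\mathbb{N}$ inducing $c\succ_i c'$ iff $u_i(c)>u_i(c')$; $a_i$ is $i$'s top candidate and $\mathbf{a}=(a_1,\dots,a_n)$. A ballot vector is $\mathbf{b}=(b_1,\dots,b_n)$ with $b_i\in C\cup\{\bot\}$ ($\bot$ = abstain); $(\mathbf{b}_{-i},b')$ replaces $b_i$ by $b'$. $\mathrm{sc}(c,\mathbf{b})=|\{i:b_i=c\}|$, $M(\mathbf{b})=\max_c\mathrm{sc}(c,\mathbf{b})$, $W(\mathbf{b})=\{c:\mathrm{sc}(c,\mathbf{b})=M(\mathbf{b})\}$, $H(\mathbf{b})=\{c:\mathrm{sc}(c,\mathbf{b})=M(\mathbf{b})-1\}$. If $|W(\mathbf{b})|=1$ its element wins; otherwise under $R^C$ the winner is uniform on $W(\mathbf{b})$, and under $R^V$ a uniformly random voter $i\in N$ is chosen and the winner is $b_i$ if $b_i\in W(\mathbf{b})$, else $i$'s most preferred candidate in $W(\mathbf{b})$. Let $p_j(\mathbf{b})$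 be the probability $c_j$ wins. Fix $0<\varepsilon<\min\{1/m,1/n\}$. In the truth-biased setting $\mathcal{T}$, voter $i$'s utility is $U_i(\mathbf{b})=\sum_jp_j(\mathbf{b})u_i(c_j)$ if $b_i\in C\setminus\{a_i\}$, that plus $\varepsilon$ if $b_i=a_i$, and $-\infty$ if $b_i=\bot$. The game $(\mathcal{T},R,\mathbf{u})$ has players $N$ with action sets $C\cup\{\bot\}$; a PNE is a ballot vector $\mathbf{b}$ with $U_i(\mathbf{b})\ge U_i(\mathbf{b}_{-i},b')$ for all $i$ and $b'$. *)

From mathcomp Require Import all_boot all_order all_algebra.
Set Implicit Arguments. Unset Strict Implicit. Unset Printing Implicit Defensive.
Import Order.TTheory GRing.Theory Num.Theory.
Local Open Scope ring_scope.

(* Tie-breaking rules R^C (uniform over candidates) and R^V (random voter). *)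
Inductive rule := RC | RV.

Section Voting.
Variables (C : finType) (n : nat).

(* A ballot vector: voter i votes [Some c] for candidate c, or [None] (abstain = ⊥). *)
Definition ballot := 'I_n -> option C.

Definition update (b : ballot) (i : 'I_n) (b' : option C) : ballot :=
  fun k => if k == i then b' else b k.

Definition truthful (a : 'I_n -> C) : ballot := fun i => Some (a i).

Definition sc (c : C) (b : ballot) : nat := #|[set i | b i == Some c]|.
Definition Mx (b : ballot) : nat := (\max_(c : C) sc c b)%N.
Definition W (b : ballot) : {set C} := [set c | sc c b == Mx b].
Definition H (b : ballot) : {set C} := [set c | (sc c b).+1 == Mx b].

Definition best (u : 'I_n -> C -> nat) (i : 'I_n) (S : {set C}) (c : C) : bool :=
  (c \in S) && [forall d in S, (u i d <= u i c)%N].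

Variable R : realFieldType.

Definition prob (r : rule) (u : 'I_n -> C -> nat) (b : ballot) (c : C) : R :=
  if #|W b| == 1%N then ((c \in W b)%:R) else
  match r with
  | RC => (c \in W b)%:R / (#|W b|)%:R
  | RV => (#|[set i | if b i is Some d then
                        (if d \in W b then d == c else best u i (W b) c)
                      else best u i (W b) c]|)%:R / n%:R
  end.

Definition exp_util (r : rule) (u : 'I_n -> C -> nat) (b : ballot) (i : 'I_n) : R :=
  \sum_(c : C) prob r u b c * (u i c)%:R.

(* Utility in the truth-biased setting; [None] encodes -infinity. *)
Definition U (r : rule) (u : 'I_n -> C -> nat) (a : 'I_n -> C) (eps : R)
    (b : ballot) (i : 'I_n) : option R :=
  match b i with
  | None => None
  | Some c => Some (exp_util r u b i + (if c == a i then eps else 0))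
  end.

Definition ule (x y : option R) : bool :=
  match x, y with
  | None, _ => true
  | Some _, None => false
  | Some x, Some y => x <= y
  end.

Definition is_PNE (r : rule) (u : 'I_n -> C -> nat) (a : 'I_n -> C) (eps : R)
    (b : ballot) : Prop :=
  forall (i : 'I_n) (b' : option C),
    ule (U r u a eps (update b i b') i) (U r u a eps b i).

End Voting.

From mathcomp Require Import all_boot all_order all_algebra.
From mathcomp Require Import zify lra.
Import Order.TTheory GRing.Theory Num.Theory.
Local Open Scope ring_scope.
Set Implicit Arguments. Unset Strict Implicit.

(* A deviation from the truthful profile can only change the winners by
   letting a candidate [ck] of [H] that the deviator did not support tie with
   the unique winner [cj]; a supporter of [cj] cannot gain at all, since [cj]
   is her favourite.  Deviating to such a [ck] forfeits the bonus [eps] and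
   gains at least [P(ck) (u ck - u cj)], where [P(ck) >= 1/m] under R^C and
   [P(ck) >= 1/n] under R^V, both above [eps]: it pays off exactly when the
   deviator prefers [ck] to [cj]. *)

Section Scores.
Variables (C : finType) (n : nat).
Implicit Types (b : ballot C n) (c d w x : C).

Lemma sc_sum b d : sc d b = (\sum_k (b k == Some d))%N.
Proof.
rewrite /sc -sum1_card big_mkcond /=; apply: eq_bigr => k _.
by rewrite inE; case: (b k == Some d).
Qed.

Lemma sc_update b i y d :
  (sc d (update b i y) + (b i == Some d) = sc d b + (y == Some d))%N.
Proof.
rewrite !sc_sum (bigD1 i) //= [X in _ = (X + _)%N](bigD1 i) //= /update eqxx.
rewrite (eq_bigr (fun k => (b k == Some d) : nat)); last by move=> k /negbTE ->.
lia.
Qed.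

Lemma update_at b i y : update b i y i = y.
Proof. by rewrite /update eqxx. Qed.

Lemma sc_le_Mx b d : (sc d b <= Mx b)%N.
Proof. exact: (leq_bigmax (F := fun c => sc c b)). Qed.

Lemma Mx_eq b w m : sc w b = m -> (forall d, sc d b <= m)%N -> Mx b = m.
Proof.
move=> hw hle; apply/eqP; rewrite eqn_leq -{2}hw sc_le_Mx andbT.
by apply/bigmax_leqP => d _; apply: hle.
Qed.

Lemma W_neq0 b c : W b != set0.
Proof.
have [|w hw] := bigop.eq_bigmax (fun d => sc d b); first by apply/card_gt0P; exists c.
by apply/set0Pn; exists w; rewrite inE /Mx hw.
Qed.

Lemma W_set1_sc b w : W b = [set w] -> sc w b = Mx b /\ forall d, d != w -> (sc d b < Mx b)%N.
Proof.
move=> hW; split; first by apply/eqP; have := set11 w; rewrite -hW inE.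
move=> d hdw; rewrite ltn_neqAle sc_le_Mx andbT.
by apply: contra hdw; rewrite -in_set1 -hW inE.
Qed.

(* As voter [i] did not support [w], [w] keeps its lead over everybody
   except possibly [c], the only candidate gaining a vote. *)
Lemma W_update_unique b w i x c :
  W b = [set w] -> b i = Some x -> x != w ->
  W (update b i (Some c)) = if (c != x) && (c \in H b) then [set w; c] else [set w].
Proof.
move=> /W_set1_sc[hw hlt] hbi /negbTE hxw'; set b' := update b i (Some c).
have hsc d : (sc d b' + (x == d) = sc d b + (c == d))%N.
  by have := sc_update b i (Some c) d; rewrite hbi.
have [ecw | hcw] := eqVneq c w.
  subst c; have hM : Mx b' = (Mx b).+1.
    apply: (Mx_eq (w := w)); first by have := hsc w; rewrite eqxx hxw'; lia.
    move=> d; have [->|hdw] := eqVneq d w; first by have := hsc w; rewrite eqxx hxw'; lia.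
    by have := hsc d; have := sc_le_Mx b d; lia.
  have -> : w \in H b = false by rewrite inE hw; lia.
  rewrite andbF; apply/setP => d; rewrite !inE hM.
  have [->|hdw] := eqVneq d w; first by have := hsc w; rewrite eqxx hxw'; lia.
  by have := hsc d; have := sc_le_Mx b d; rewrite [w == d]eq_sym (negbTE hdw); lia.
have hM : Mx b' = Mx b.
  apply: (Mx_eq (w := w)); first by have := hsc w; rewrite (negbTE hcw) hxw'; lia.
  move=> d; have [->|hdw] := eqVneq d w; first by have := hsc w; rewrite (negbTE hcw) hxw'; lia.
  by have := hsc d; have := hlt d hdw; lia.
have memW d : (d \in W b') = (d == w) || [&& d == c, c != x & c \in H b].
  rewrite inE hM; have [->|hdw] := eqVneq d w.
    by have := hsc w; rewrite (negbTE hcw) hxw'; lia.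
  have [->|hdc] := eqVneq d c; last first.
    apply/negbTE; rewrite neq_ltn; have := hsc d; have := hlt d hdw.
    by rewrite [c == d]eq_sym (negbTE hdc); lia.
  rewrite inE; have := hsc c; have := hlt c hcw.
  by rewrite eqxx; have [_|_] := eqVneq x c; rewrite /=; lia.
by case: ifP => hcH; apply/setP => d; rewrite memW ?in_set2 ?in_set1 hcH ?andbT ?andbF ?orbF.
Qed.

End Scores.

Section Lotteries.
Variables (R : realFieldType) (C : finType) (n : nat) (u : 'I_n -> C -> nat).
Hypothesis u_inj : forall i, injective (u i).
Implicit Types (b : ballot C n) (c d w : C).

(* Under [RV], the winner when voter [k] is drawn. *)
Definition rv_pick b k c : bool :=
  if b k is Some d then (if d \in W b then d == c else best u k (W b) c)
  else best u k (W b) c.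

Lemma probE r b c :
  prob R r u b c = if #|W b| == 1%N then ((c \in W b)%:R) else
  match r with
  | RC => (c \in W b)%:R / (#|W b|)%:R
  | RV => (#|[set k | rv_pick b k c]|)%:R / n%:R
  end.
Proof. by []. Qed.

Lemma best_uniq k S c c' : best u k S c -> best u k S c' -> c = c'.
Proof.
move=> /andP[hc /forall_inP hc'] /andP[hd /forall_inP hd'].
by apply: (u_inj (i := k)); apply/eqP; rewrite eqn_leq hd' ?hc'.
Qed.

Lemma best_exists k (S : {set C}) : S != set0 -> exists c, best u k S c.
Proof.
move=> /set0Pn[c0 h0].
have [|w wS hw] := @bigop.eq_bigmax_cond _ (mem S) (u k); first by apply/card_gt0P; exists c0.
exists w; rewrite /best wS; apply/forall_inP => d dS.
by rewrite -hw; apply: (leq_bigmax_cond (F := u k)).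
Qed.

Lemma rv_pick_uniq b k : W b != set0 -> exists w, forall c, rv_pick b k c = (c == w).
Proof.
move=> /(best_exists k)[w hw].
have hbest c : best u k (W b) c = (c == w).
  by apply/idP/eqP => [hc|->//]; apply: best_uniq hc hw.
rewrite /rv_pick; case: (b k) => [d|]; last by exists w.
by case: (d \in W b); [exists d => c; rewrite eq_sym | exists w].
Qed.

Lemma rv_pick_out b k c : c \notin W b -> rv_pick b k c = false.
Proof.
move=> hc; have hb : best u k (W b) c = false by rewrite /best (negbTE hc).
rewrite /rv_pick; case: (b k) => [d|//]; case: ifP => // hd.
by apply/negbTE; apply: contraNneq hc => <-.
Qed.

Lemma sum_card_rv_pick b : W b != set0 -> (\sum_c #|[set k | rv_pick b k c]| = n)%N.
Proof.
move=> hW; under eq_bigr => c _ do rewrite -sum1_card big_mkcond /=.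
rewrite exchange_big /= -[n in RHS]card_ord -sum1_card; apply: eq_bigr => k _.
have [w hw] := rv_pick_uniq k hW.
rewrite (bigD1 w) //= inE hw eqxx big1 // => c hc.
by rewrite inE hw (negbTE hc).
Qed.

Lemma sum_mem (A : {set C}) : \sum_c ((c \in A)%:R : R) = (#|A|)%:R.
Proof. by rewrite -natr_sum -sum1_card [in RHS]big_mkcond. Qed.

Lemma prob_ge0 r b c : 0 <= prob R r u b c.
Proof. by rewrite probE; case: ifP => _; [|case: r; apply: divr_ge0]; apply: ler0n. Qed.

Lemma prob_out r b c : c \notin W b -> prob R r u b c = 0.
Proof.
move=> hc; rewrite probE (negbTE hc) mul0r; case: ifP => // _; case: r => //.
by rewrite (_ : [set k | _] = set0) ?cards0 ?mul0r //; apply/setP => k; rewrite !inE rv_pick_out.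
Qed.

Lemma prob_sum r b (i : 'I_n) c0 : \sum_c prob R r u b c = 1.
Proof.
have hW := W_neq0 b c0.
have hW0 : (#|W b| != 0)%N by rewrite cards_eq0.
have hn : (n != 0)%N by rewrite -lt0n (leq_ltn_trans _ (ltn_ord i)).
under eq_bigr => c _ do rewrite probE.
have [h1|_] := eqVneq #|W b| 1%N; first by rewrite sum_mem h1.
case: r; rewrite -mulr_suml; last by rewrite -natr_sum sum_card_rv_pick // divff // pnatr_eq0.
by rewrite sum_mem divff // pnatr_eq0.
Qed.

(* Under [RC] because [#|W b| <= #|C|]; under [RV] because drawing voter [i]
   elects [c]. *)
Lemma prob_ge_min r b (i : 'I_n) c :
  c \in W b -> b i = Some c -> Num.min (1 / (#|C|)%:R) (1 / n%:R) <= prob R r u b c.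
Proof.
move=> hc hbi; have hm : (0 < #|C|)%N by apply/card_gt0P; exists c.
have hn : (0 < n)%N by rewrite (leq_ltn_trans _ (ltn_ord i)).
rewrite probE hc; case: ifP => _.
  by rewrite /= ge_min ler_pdivrMr ?ltr0n // !mul1r ler1n hm.
case: r; rewrite ge_min; apply/orP; [left | right]; rewrite !mul1r.
  rewrite lef_pV2 ?posrE ?ltr0n ?ler_nat ?max_card //.
  by apply/card_gt0P; exists c.
rewrite -[X in X <= _]mul1r ler_pM2r ?invr_gt0 ?ltr0n // ler1n.
by apply/card_gt0P; exists i; rewrite inE /rv_pick hbi hc eqxx.
Qed.

Lemma exp_util_single r b i w : W b = [set w] -> exp_util R r u b i = (u i w)%:R.
Proof.
move=> hW; rewrite /exp_util (bigD1 w) //= big1 ?addr0.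
  by rewrite probE hW cards1 /= inE eqxx mul1r.
by move=> c hc; rewrite probE hW cards1 /= inE (negbTE hc) mul0r.
Qed.

Lemma exp_util_le r b i w :
  (forall c, c \in W b -> (u i c <= u i w)%N) -> exp_util R r u b i <= (u i w)%:R.
Proof.
move=> hle; apply: (@le_trans _ _ (\sum_c prob R r u b c * (u i w)%:R)).
  apply: ler_sum => c _; have [hc|hc] := boolP (c \in W b).
    by rewrite ler_wpM2l ?prob_ge0 // ler_nat hle.
  by rewrite prob_out // !mul0r.
by rewrite -mulr_suml (prob_sum r b i w) mul1r.
Qed.

Lemma exp_util_pair_ge r b i w c :
  W b = [set w; c] -> (u i w < u i c)%N -> (u i w)%:R + prob R r u b c <= exp_util R r u b i.
Proof.
move=> hW hlt; have hcw : c != w by apply: contraTneq hlt => ->; rewrite ltnn.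
have -> : exp_util R r u b i =
    (u i w)%:R + \sum_d prob R r u b d * ((u i d)%:R - (u i w)%:R).
  rewrite /exp_util; under [X in _ = _ + X]eq_bigr => d _ do rewrite mulrBr.
  by rewrite sumrB -mulr_suml (prob_sum r b i w) mul1r addrC subrK.
rewrite lerD2l (bigD1 c) //= big1 ?addr0.
  rewrite -[X in X <= _]mulr1 ler_wpM2l ?prob_ge0 //.
  by rewrite -natrB ?ler1n ?subn_gt0 // ltnW.
move=> d hdc; have [->|hdw] := eqVneq d w; first by rewrite subrr mulr0.
by rewrite prob_out ?mul0r // hW !inE negb_or hdw.
Qed.

End Lotteries.

Section TruthfulProfile.
Variables (R : realFieldType) (C : finType) (n : nat).
Variables (u : 'I_n -> C -> nat) (a : 'I_n -> C) (eps : R) (r : rule) (cj : C).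
Hypothesis u_inj : forall i, injective (u i).
Hypothesis a_top : forall i c, c != a i -> (u i c < u i (a i))%N.
Hypothesis eps_ltC : eps < 1 / (#|C|)%:R.
Hypothesis eps_ltn : eps < 1 / n%:R.
Hypothesis W_truthful : W (truthful a) = [set cj].

Local Notation a' := (truthful a).

Lemma U_truthful i : U r u a eps a' i = Some ((u i cj)%:R + eps).
Proof. by rewrite /U /truthful eqxx (exp_util_single R u r i W_truthful). Qed.

Lemma exp_util_deviation_le i c :
    (forall ck, ck \in H a' -> ck != a i -> (u i ck < u i cj)%N) ->
  exp_util R r u (update a' i (Some c)) i <= (u i cj)%:R.
Proof.
move=> hH; apply: exp_util_le => // d; have [<-|haj] := eqVneq (a i) cj.
  by move=> _; have [->//|/a_top/ltnW] := eqVneq d (a i).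
rewrite (W_update_unique c W_truthful (erefl _) haj).
case: ifP => [/andP[hca hcH] | _]; last by rewrite inE => /eqP->.
by rewrite !inE => /orP[/eqP->//|/eqP->]; apply/ltnW/hH.
Qed.

Lemma exp_util_deviation_gt i ck : ck \in H a' -> ck != a i -> (u i cj <= u i ck)%N ->
  (u i cj)%:R + eps < exp_util R r u (update a' i (Some ck)) i.
Proof.
move=> hck hcka hle; have hckj : ck != cj.
  by apply: contraTneq hck => ->; have [hM _] := W_set1_sc W_truthful; rewrite inE hM; lia.
have hlt : (u i cj < u i ck)%N by rewrite ltn_neqAle hle andbT (inj_eq (@u_inj i)) eq_sym.
have haj : a i != cj by apply: contraTneq hlt => <-; rewrite -leqNgt ltnW ?a_top.
set b' := update a' i (Some ck).
have hWb : W b' = [set cj; ck] by rewrite (W_update_unique ck W_truthful (erefl _) haj) hcka hck.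
have hck' : ck \in W b' by rewrite hWb !inE eqxx orbT.
have heps : eps < Num.min (1 / (#|C|)%:R) (1 / n%:R) by rewrite lt_min eps_ltC.
have := prob_ge_min R u r hck' (update_at a' i (Some ck)).
have := exp_util_pair_ge R u_inj r (i := i) hWb hlt.
lra.
Qed.

End TruthfulProfile.

Theorem theorem5 (R : realFieldType) (C : finType) (n : nat)
    (u : 'I_n -> C -> nat) (a : 'I_n -> C) (eps : R) (r : rule) (cj : C) :
  (forall i, injective (u i)) ->
  (forall i c, c != a i -> (u i c < u i (a i))%N) ->
  0 < eps -> eps < 1 / (#|C|)%:R -> eps < 1 / n%:R ->
  W (truthful a) = [set cj] ->
  (is_PNE r u a eps (truthful a) <->
   forall (i : 'I_n) (ck : C), ck \in H (truthful a) -> ck != a i ->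
     (u i ck < u i cj)%N).
Proof.
move=> u_inj a_top eps_gt0 eps_ltC eps_ltn hW.
split=> [hPNE i ck hck hcka | hH i [c|]]; last by rewrite /U update_at.
  rewrite ltnNge; apply/negP => hle.
  have := hPNE i (Some ck); rewrite (U_truthful u eps r hW) /U update_at /= (negbTE hcka) addr0.
  by have := exp_util_deviation_gt r u_inj a_top eps_ltC eps_ltn hW hck hcka hle; lra.
rewrite (U_truthful u eps r hW) /U update_at /=.
by have := exp_util_deviation_le R r u_inj a_top hW c (hH i); case: (c == a i); lra.
Qed.
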